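(* In the model described in the context, with $\tilde k(p)=(1+\theta)\big(1-(1-p)^c\big)$ for $c>1$ and $\theta\ge0$, the indemnity $I\equiv0$ is never optimal.
   Context: Let $X\ge0$ be a random variable with $\mathbb{P}(X=0)=1-q$, where $q\in(0,1]$, and with density $q\lambda e^{-\lambda x}$ on $(0,\infty)$, where $\lambda>0$. So $S_X(t)=qe^{-\lambda t}$ for $t\ge0$. $\mathcal{I}_c$ is the set of $I:[0,\infty)\to[0,\infty)$ with $0\le I(x)\le x$ and $0\le I(x)-I(y)\le x-y$ for $0\le y\le x$. For $Y\ge0$ with $S_Y(t)=\mathbb{P}(Y>t)$, the premium is $$\pi(Y)=\int_0^\infty\tilde k(S_Y(t))\,dt.$$ The buyer has wealth $w$ and utility $u$ with $u'(x)=e^{-\gamma x}$, $\gamma>0$. She chooses $I\in\mathcal{I}_c$ to maximize $\mathbb{E}[u(w-X+I(X)-\pi(I(X)))]$; the buyer's distortion is the identity. *)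

From HB Require Import structures.
From mathcomp Require Import all_boot all_order all_algebra.
From mathcomp Require Import all_classical all_reals all_analysis.
Set Implicit Arguments. Unset Strict Implicit. Unset Printing Implicit Defensive.
Import Order.TTheory GRing.Theory Num.Theory.
Import numFieldNormedType.Exports.
Local Open Scope classical_set_scope.
Local Open Scope ring_scope.

(* The admissible indemnities I_c (only values on [0, +oo) matter). *)
Definition Ic {R : realType} (I : R -> R) : Prop :=
  (forall x, 0 <= x -> 0 <= I x <= x) /\
  (forall x y, 0 <= y -> y <= x -> 0 <= I x - I y <= x - y).

Definition ktilde {R : realType} (theta c : R) (p : R) : R :=
  (1 + theta) * (1 - (1 - p) `^ c).

Definition survival {R : realType} {d} {T : measurableType d}
  (P : probability T R) (Y : T -> R) (t : R) : R :=
  fine (P [set w | t < Y w]).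

Definition premium {R : realType} {d} {T : measurableType d}
  (P : probability T R) (k : R -> R) (Y : T -> R) : R :=
  fine (\int[@lebesgue_measure R]_(t in `[0%R, +oo[%classic)
          (k (survival P Y t))%:E)%E.

Definition expected_utility {R : realType} {d} {T : measurableType d}
  (P : probability T R) (u : R -> R) (k : R -> R) (w : R) (X : T -> R)
  (I : R -> R) : \bar R :=
  (\int[P]_om (u (w - X om + I (X om) - premium P k (I \o X)))%:E)%E.

From HB Require Import structures.
From mathcomp Require Import all_boot all_order all_algebra.
From mathcomp Require Import all_classical all_reals all_analysis.
From mathcomp Require Import ring lra measurable_realfun.
Import Order.TTheory GRing.Theory Num.Theory.
Import numFieldNormedType.Exports.
Local Open Scope classical_set_scope.
Local Open Scope ring_scope.

(* Insure only the large losses: take the stop-loss indemnity (x - dd)^+ with a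
   large deductible dd.  As k~(p) <= (1 + theta) n p for an integer n >= c, its
   premium pi is O(e^{-lambda dd}).  Concavity of u gives
   u(b) - u(a) >= u'(b) (b - a), so paying pi costs at most
   pi u'(w - d0 - pi) = pi u'(w - dd - pi) e^{-gamma (dd - d0)} on {X <= d0},
   at most pi u'(w - dd - pi) on {X > d0}, and gains at least
   (1 - pi) u'(w - dd - pi) on {X > dd + 1}.  In expectation the gain, of order
   q e^{-lambda (dd + 1)}, beats the loss pi (e^{-gamma (dd - d0)} + q e^{-lambda d0})
   once lambda d0 and gamma (dd - d0) are large. *)

Definition stop_loss {R : realType} (dd x : R) : R := Num.max (x - dd) 0.

Lemma Ic_stop_loss {R : realType} (dd : R) : 0 <= dd -> Ic (stop_loss dd).
Proof.
move=> dd0; split => [x x0|x y y0 yx]; rewrite /stop_loss.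
  by case: (leP (x - dd) 0) => h; lra.
by case: (leP (x - dd) 0) => h1; case: (leP (y - dd) 0) => h2; lra.
Qed.

Lemma measurable_stop_loss {R : realType} (dd : R) : measurable_fun setT (stop_loss dd).
Proof. by apply: measurable_maxr => //; exact: measurable_funB. Qed.

Definition two_step {R : realType} (a b c0 c1 c2 x : R) : R :=
  c0 + c1 * ((a < x)%R)%:R + c2 * ((b < x)%R)%:R.

Section exponential_utility.
Context {R : realType} {gamma : R} {u : R -> R}.
Hypothesis gamma_gt0 : 0 < gamma.
Hypothesis u_derive : forall x : R, is_derive x 1 u (expR (- (gamma * x))).

Lemma continuous_utility : continuous u.
Proof.
move=> x; apply: differentiable_continuous; apply/derivable1_diffP.
by have [] := u_derive x.
Qed.

Lemma marginal_utility_antitone : {homo (fun x => expR (- (gamma * x))) : x y /~ y <= x}.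
Proof. by move=> x y xy; rewrite ler_expR lerN2 ler_wpM2l // ltW. Qed.

Lemma utility_MVT a b : a < b ->
  exists2 c, a < c < b & u b - u a = expR (- (gamma * c)) * (b - a).
Proof.
move=> ab; have [c] := MVT ab (fun x _ => u_derive x)
  (continuous_subspaceT continuous_utility).
by rewrite in_itv /=; exists c.
Qed.

Lemma utility_tangent a b : expR (- (gamma * b)) * (b - a) <= u b - u a.
Proof.
have [ab|ba|->] := ltgtP a b; last by rewrite !subrr mulr0.
- have [c /andP[_ cb] ->] := utility_MVT _ _ ab.
  apply: ler_wpM2r; first by rewrite subr_ge0 ltW.
  exact/marginal_utility_antitone/ltW.
- have [c /andP[bc _] uab] := utility_MVT _ _ ba.
  rewrite -[u b - u a]opprB uab -[b - a]opprB mulrN lerN2.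
  apply: ler_wpM2r; first by rewrite subr_ge0 ltW.
  exact/marginal_utility_antitone/ltW.
Qed.

Lemma utility_nondecreasing : {homo u : x y / x <= y}.
Proof.
move=> x y xy; rewrite -subr_ge0; apply: le_trans (utility_tangent x y).
by rewrite mulr_ge0 ?expR_ge0 ?subr_ge0.
Qed.

Lemma stop_loss_gain (w d0 dd pi x : R) : d0 <= dd -> 0 <= pi ->
  two_step d0 (dd + 1) (- (pi * expR (- (gamma * (w - d0 - pi)))))
    (- (pi * expR (- (gamma * (w - dd - pi)))))
    ((1 - pi) * expR (- (gamma * (w - dd - pi)))) x
  <= u (w - x + stop_loss dd x - pi) - u (w - x).
Proof.
move=> d0dd pi0; set E0 := expR (- (gamma * (w - d0 - pi))).
set E := expR (- (gamma * (w - dd - pi))).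
have E0_ge0 : 0 <= E0 by exact: expR_ge0.
have E_ge0 : 0 <= E by exact: expR_ge0.
apply: le_trans (utility_tangent _ _); rewrite /two_step /stop_loss.
have [xdd|ddx] := leP x dd.
- have -> : Num.max (x - dd) 0 = 0 by apply/max_idPr; rewrite subr_le0.
  have -> : (dd + 1 < x) = false by apply/negbTE; rewrite -leNgt; lra.
  rewrite addr0 mulr0 addr0.
  have [xd0|d0x] := leP x d0; rewrite /= ?mulr0 ?mulr1 ?subr0.
  + have : expR (- (gamma * (w - x - pi))) <= E0 by apply: marginal_utility_antitone; lra.
    nra.
  + have : expR (- (gamma * (w - x - pi))) <= E by apply: marginal_utility_antitone; lra.
    nra.
- have -> : Num.max (x - dd) 0 = x - dd by apply/max_idPl; rewrite subr_ge0 ltW.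
  have -> : w - x + (x - dd) - pi = w - dd - pi by ring.
  rewrite (le_lt_trans d0dd ddx) mulr1 -/E.
  have [x1|x1] := leP x (dd + 1); rewrite ?mulr0 ?mulr1; nra.
Qed.

End exponential_utility.

Lemma bernoulli_exprn (R : realDomainType) (p : R) n :
  0 <= p <= 1 -> 1 - n%:R * p <= (1 - p) ^+ n.
Proof.
move=> /andP[p0 p1]; elim: n => [|n IH]; first by rewrite mul0r subr0 expr0.
rewrite exprS -natr1.
have : (1 - p) * (1 - n%:R * p) <= (1 - p) * (1 - p) ^+ n.
  by rewrite ler_wpM2l // subr_ge0.
have : 0 <= n%:R * p * p by rewrite !mulr_ge0.
nra.
Qed.

Section distortion.
Context {R : realType} (theta c : R).

Lemma ktilde0 : ktilde theta c 0 = 0.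
Proof. by rewrite /ktilde subr0 powR1 subrr mulr0. Qed.

Lemma measurable_ktilde : measurable_fun setT (ktilde theta c).
Proof.
apply: measurable_funM => //; apply: measurable_funB => //.
by apply: measurableT_comp (measurable_powR _) _; exact: measurable_funB.
Qed.

Lemma ktilde_ge0_le (n : nat) (p : R) : 0 <= theta -> 0 <= c <= n%:R ->
  0 <= p < 1 -> 0 <= ktilde theta c p <= (1 + theta) * n%:R * p.
Proof.
move=> theta0 /andP[c0 cn] /andP[p0 p1]; rewrite /ktilde -mulrA.
have p1' : 0 < 1 - p <= 1 by rewrite subr_gt0 p1 /= lerBlDr lerDl.
have pow_le1 : (1 - p) `^ c <= 1 by have := ger_powR p1' c0; rewrite powRr0.
have pow_ge : (1 - p) ^+ n <= (1 - p) `^ c.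
  by rewrite -powR_mulrn ?(ger_powR p1' cn) // subr_ge0 ltW.
have bern : 1 - n%:R * p <= (1 - p) ^+ n by apply: bernoulli_exprn; rewrite p0 ltW.
apply/andP; split; first by rewrite mulr_ge0 ?subr_ge0 //; lra.
by rewrite ler_wpM2l; lra.
Qed.

End distortion.

Section exponential_decay.
Context {R : realType}.
Let mu := @lebesgue_measure R.

Lemma integral_itv0y_rate_expR (lambda : R) : 0 < lambda ->
  (\int[mu]_(t in `[0%R, +oo[) (lambda * expR (- (lambda * t)))%:E = 1)%E.
Proof.
move=> lambda0; rewrite -(integral_exponential_pdf lambda0) integral_mkcond.
apply: eq_integral => t _; rewrite /exponential_pdf !patchE.
by case: ifP => //; rewrite mulNr.
Qed.

Lemma integral_itv0y_le_expR (F : R -> R) (C lambda : R) : 0 < lambda ->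
  measurable_fun (`[0, +oo[ : set R) F ->
  (forall t, 0 <= t -> 0 <= F t <= C * expR (- (lambda * t))) ->
  0 <= fine (\int[mu]_(t in `[0%R, +oo[) (F t)%:E)%E <= C / lambda.
Proof.
move=> lambda0 mF F_bounds.
have in_itv0y (t : R) : `[0%R, +oo[%classic t -> 0 <= t by rewrite /= in_itv /= andbT.
have C_ge0 : 0 <= C.
  have /andP[F0 FC] := F_bounds 0 (lexx 0).
  by rewrite mulr0 oppr0 expR0 mulr1 in FC; exact: le_trans FC.
pose G (t : R) := lambda * expR (- (lambda * t)).
have mG : measurable_fun setT G.
  rewrite /G; apply: measurable_funM; first exact: measurable_cst.
  by apply: measurableT_comp => //; apply: measurableT_comp.
have G_ge0 t : 0 <= G t by rewrite mulr_ge0 ?expR_ge0 ?ltW.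
have F_le : (\int[mu]_(t in `[0%R, +oo[) (F t)%:E <= (C / lambda)%:E)%E.
  apply: (@le_trans _ _ (\int[mu]_(t in `[0%R, +oo[) ((C / lambda)%:E * (G t)%:E))%E).
    apply: ge0_le_integral => //.
    - by move=> t /in_itv0y /F_bounds /andP[].
    - exact/measurable_EFinP.
    - by apply: measurable_funeM; apply/measurable_EFinP; exact: measurable_funTS.
    - move=> t /in_itv0y /F_bounds /andP[_]; rewrite -EFinM lee_fin /G.
      by rewrite mulrA divfK // lt0r_neq0.
  rewrite ge0_integralZl_EFin //.
  - by rewrite integral_itv0y_rate_expR // mule1.
  - by move=> t _; rewrite lee_fin.
  - exact/measurable_EFinP/measurable_funTS.
  - by rewrite divr_ge0 // ltW.
have F_ge0 : (0 <= \int[mu]_(t in `[0%R, +oo[) (F t)%:E)%E.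
  by apply: integral_ge0 => t /in_itv0y /F_bounds /andP[]; rewrite lee_fin.
apply/andP; split; first exact: fine_ge0.
by rewrite -lee_fin fineK // ge0_fin_numE // (le_lt_trans F_le) ?ltry.
Qed.

End exponential_decay.

Section premium.
Context {R : realType} {d : measure_display} {T : measurableType d}.
Variables (P : probability T R) (X : T -> R).

Lemma premium_cst0 (k : R -> R) : k 0 = 0 -> premium P k (fun=> 0) = 0.
Proof.
move=> k0; rewrite /premium.
rewrite (_ : \int[_]_(t in _) _ = \int[lebesgue_measure]_(t in `[0%R, +oo[) 0)%E.
  by rewrite integral0.
apply: eq_integral => t; rewrite inE /= in_itv /= andbT => t0.
rewrite /survival /=.
have -> : [set w | t < 0] = set0 :> set T.
  by apply/seteqP; split => w //=; rewrite ltNge t0.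
by rewrite measure0 k0.
Qed.

Lemma premium_stop_loss_le (k : R -> R) (q lambda dd K : R) :
  0 <= q -> 0 < lambda -> 0 <= dd -> measurable_fun setT k ->
  (forall t, 0 <= t -> P [set om | t < X om] = (q * expR (- (lambda * t)))%:E) ->
  (forall p, 0 <= p <= q * expR (- (lambda * dd)) -> 0 <= k p <= K * p) ->
  0 <= premium P k (stop_loss dd \o X) <= K * q / lambda * expR (- (lambda * dd)).
Proof.
move=> q0 lambda0 dd0 mk tail k_le.
pose S t := q * expR (- (lambda * (dd + t))).
have survivalE t : 0 <= t -> survival P (stop_loss dd \o X) t = S t.
  move=> t0; rewrite /survival (_ : [set w | _] = [set om | dd + t < X om]).
    by rewrite tail ?addr_ge0.
  by apply/seteqP; split => om /=; rewrite /stop_loss; case: (leP (X om - dd) 0); lra.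
rewrite /premium (_ : \int[_]_(t in _) _ =
    \int[lebesgue_measure]_(t in `[0%R, +oo[) (k (S t))%:E)%E.
  rewrite mulrAC; apply: integral_itv0y_le_expR => //.
  - apply: measurable_funTS; apply: measurableT_comp => //.
    apply: measurable_funM => //; apply: measurableT_comp => //.
    apply: measurableT_comp => //; apply: measurable_funM => //.
    exact: measurable_funD.
  - move=> t t0; have /k_le : 0 <= S t <= q * expR (- (lambda * dd)).
      rewrite mulr_ge0 ?expR_ge0 //= ler_wpM2l // ler_expR lerN2.
      by rewrite ler_wpM2l ?lerDl // ltW.
    by rewrite /S mulrDr opprD expRD !mulrA.
by apply: eq_integral => t; rewrite inE /= in_itv /= andbT => /survivalE ->.
Qed.

Lemma premium_ktilde_stop_loss_le (theta c q lambda dd : R) (n : nat) :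
  0 <= theta -> 0 <= c <= n%:R -> 0 <= q <= 1 -> 0 < lambda -> 0 < dd ->
  (forall t, 0 <= t -> P [set om | t < X om] = (q * expR (- (lambda * t)))%:E) ->
  0 <= premium P (ktilde theta c) (stop_loss dd \o X) <=
    (1 + theta) * n%:R * q / lambda * expR (- (lambda * dd)).
Proof.
move=> theta0 cn /andP[q0 q1] lambda0 dd0 tail.
apply: premium_stop_loss_le (measurable_ktilde theta c) tail _ => //; first exact: ltW.
move=> p /andP[p0 p_le]; apply: ktilde_ge0_le => //.
have : expR (- (lambda * dd)) < 1 by rewrite expR_lt1 oppr_lt0 mulr_gt0.
by have := expR_ge0 (- (lambda * dd)); rewrite p0 /=; nra.
Qed.

End premium.

Section probability_integrals.
Context {R : realType} {d : measure_display} {T : measurableType d}.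
Variable P : probability T R.

Lemma integrable_between (f : T -> R) (a b : R) : measurable_fun setT f ->
  (forall om, a <= f om <= b) -> P.-integrable setT (EFin \o f).
Proof.
move=> mf f_ab; have bnd := finite_measure_integrable_cst P (`|a| + `|b|) measurableT.
apply: le_integrable bnd => //; first exact/measurable_EFinP.
move=> om _; rewrite /= lee_fin [X in _ <= X]ger0_norm ?addr_ge0 //.
have /andP[fa fb] := f_ab om.
have := ler_norm (- a); have := ler_norm b; have := normr_ge0 a; have := normr_ge0 b.
by rewrite normrN ler_norml => *; apply/andP; split; lra.
Qed.

Lemma le_integral_integrable_ub (f h : T -> R) : measurable_fun setT f ->
  P.-integrable setT (EFin \o h) -> (forall om, f om <= h om) ->
  (\int[P]_om (f om)%:E <= \int[P]_om (h om)%:E)%E.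
Proof.
move=> mf ih fh; rewrite integralE [leRHS]integralE leeB //.
- apply: ge0_le_integral => //.
  + exact/measurable_funepos/measurable_EFinP.
  + by move/integrableP : ih => [+ _]; exact: measurable_funepos.
  + by move=> om _; apply: (@funepos_le _ _ setT) => [? _|]; rewrite ?lee_fin ?in_setT.
- apply: ge0_le_integral => //.
  + by move/integrableP : ih => [+ _]; exact: measurable_funeneg.
  + exact/measurable_funeneg/measurable_EFinP.
  + by move=> om _; apply: (@funeneg_le _ _ setT) => [? _|]; rewrite ?lee_fin ?in_setT.
Qed.

Lemma lt_integral_of_gain (f g h : T -> R) : measurable_fun setT f ->
  P.-integrable setT (EFin \o g) -> P.-integrable setT (EFin \o h) ->
  (forall om, f om + g om <= h om) -> (0 < \int[P]_om (g om)%:E)%E ->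
  (\int[P]_om (f om)%:E < \int[P]_om (h om)%:E)%E.
Proof.
move=> mf ig ih fgh g_gt0.
have ihg : P.-integrable setT (EFin \o (h \- g)).
  by apply: eq_integrable (integrableB measurableT ih ig) => // om _.
have f_le om : f om <= (h \- g) om by rewrite /= lerBrDr.
have int_hg : (\int[P]_om ((h \- g) om)%:E =
    \int[P]_om (h om)%:E - \int[P]_om (g om)%:E)%E.
  by rewrite -integralB_EFin //; apply: eq_integral => om _; rewrite EFinB.
apply: (le_lt_trans (le_integral_integrable_ub _ _ mf ihg f_le)).
have g_fin := integrable_fin_num measurableT ig.
have h_fin := integrable_fin_num measurableT ih.
by rewrite int_hg lteBlDr // lteDl.
Qed.

Lemma integral_two_step (X : T -> R) (a b c0 c1 c2 pa pb : R) :
  measurable_fun setT X ->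
  P [set om | a < X om] = pa%:E -> P [set om | b < X om] = pb%:E ->
  P.-integrable setT (EFin \o (two_step a b c0 c1 c2 \o X)) /\
  (\int[P]_om (two_step a b c0 c1 c2 (X om))%:E = (c0 + c1 * pa + c2 * pb)%:E)%E.
Proof.
move=> mX Pa Pb.
have mgt (e : R) : measurable [set om | e < X om].
  have := mX measurableT _ (measurable_itv `]e, +oo[); rewrite setTI.
  by congr measurable; apply/seteqP; split => om /=; rewrite in_itv /= andbT.
have ltE (e : R) om : ((e < X om)%R)%:R = \1_[set om | e < X om] om :> R.
  rewrite indicE; have [h|h] := boolP (e < X om); first by rewrite mem_set.
  by rewrite memNset //=; exact/negP.
have [mA mB] := (mgt a, mgt b).
set A := [set om | a < X om] in Pa mA; set B := [set om | b < X om] in Pb mB.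
have gE om : (two_step a b c0 c1 c2 (X om))%:E =
    (c0%:E + c1%:E * (\1_A om)%:E + c2%:E * (\1_B om)%:E)%E.
  by rewrite /two_step !ltE -!EFinM -!EFinD.
have i0 := finite_measure_integrable_cst P c0 measurableT.
have iA : P.-integrable setT (fun om => c1%:E * (\1_A om)%:E)%E.
  exact/integrableZl/integrable_indic.
have iB : P.-integrable setT (fun om => c2%:E * (\1_B om)%:E)%E.
  exact/integrableZl/integrable_indic.
have i0A : P.-integrable setT (fun om => c0%:E + c1%:E * (\1_A om)%:E)%E.
  exact: integrableD.
split; first by apply: eq_integrable (integrableD _ i0A iB) => // om _; rewrite /= gE.
under eq_integral do rewrite gE.
rewrite integralD // integralD // !integralZl //; try exact: integrable_indic.
rewrite !integral_indic // !setIT.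
transitivity (c0%:E + c1%:E * pa%:E + c2%:E * pb%:E)%E.
  congr (_ + _ * _ + _ * _)%E; [|exact: Pa|exact: Pb].
  by rewrite integral_cst // -[RHS]mule1; congr (_ * _)%E; exact: probability_setT.
by rewrite -!EFinM -!EFinD.
Qed.

End probability_integrals.

Lemma exists_expR_lt {R : realType} {a eps : R} : 0 < a -> 0 < eps ->
  exists2 t, 0 < t & expR (- (a * t)) < eps.
Proof.
move=> a0 eps0; exists (a * eps)^-1; first by rewrite invr_gt0 mulr_gt0.
rewrite invfM mulrA divff ?lt0r_neq0 // mul1r expRN.
rewrite -[X in _ < X]invrK ltf_pV2 ?posrE ?expR_gt0 ?invr_gt0 //.
by have := expR_ge1Dx eps^-1; lra.
Qed.

Section stop_loss_comparison.
Context {R : realType} {d : measure_display} {T : measurableType d}.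
Context {P : probability T R} {X : T -> R} {q lambda gamma : R} {u : R -> R}.
Hypothesis gamma_gt0 : 0 < gamma.
Hypothesis u_derive : forall x : R, is_derive x 1 u (expR (- (gamma * x))).
Hypothesis mX : measurable_fun setT X.
Hypothesis X_ge0 : forall om, 0 <= X om.
Hypothesis tail :
  forall t, 0 <= t -> P [set om | t < X om] = (q * expR (- (lambda * t)))%:E.

Lemma stop_loss_expected_utility_gt (w d0 dd pi : R) : 0 <= d0 <= dd -> 0 <= pi ->
  pi * (expR (- (gamma * (dd - d0))) + q * expR (- (lambda * d0))) <
    (1 - pi) * q * expR (- (lambda * (dd + 1))) ->
  (\int[P]_om (u (w - X om))%:E <
    \int[P]_om (u (w - X om + stop_loss dd (X om) - pi))%:E)%E.
Proof.
move=> /andP[d0_ge0 d0dd] pi_ge0 cond.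
have mu : measurable_fun setT u.
  exact: continuous_measurable_fun (continuous_utility u_derive).
set E := expR (- (gamma * (w - dd - pi))).
have E_gt0 : 0 < E by exact: expR_gt0.
have [ig Ig] := integral_two_step P X d0 (dd + 1)
  (- (pi * expR (- (gamma * (w - d0 - pi))))) (- (pi * E)) ((1 - pi) * E) _ _ mX
  (tail d0 d0_ge0) (tail (dd + 1) (addr_ge0 (le_trans d0_ge0 d0dd) ler01)).
apply: (lt_integral_of_gain P _ _ _ _ ig).
- apply: measurableT_comp mu _; exact: measurable_funB.
- apply: (integrable_between P _ (u (w - dd - pi)) (u w)).
    apply: measurableT_comp mu _; apply: measurable_funB => //.
    apply: measurable_funD; first exact: measurable_funB.
    exact: measurableT_comp (measurable_stop_loss dd) mX.
  move=> om; rewrite /stop_loss; have := X_ge0 om.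
  by case: (leP (X om - dd) 0) => h X0; apply/andP; split;
    apply: (utility_nondecreasing gamma_gt0 u_derive); lra.
- by move=> om; rewrite -lerBrDl; exact: stop_loss_gain.
- rewrite Ig lte_fin.
  have -> : expR (- (gamma * (w - d0 - pi))) = E * expR (- (gamma * (dd - d0))).
    by rewrite -expRD; congr expR; ring.
  nra.
Qed.

End stop_loss_comparison.

Lemma deductible_condition {R : realFieldType} {M q L z e0 e1 pi : R} :
  0 < M -> 0 < q -> 0 < L <= 1 -> 0 < z <= e0 -> 0 <= e1 ->
  e0 < L / (4 * M) -> e1 < q * L / (4 * M) -> 0 <= pi <= M * z ->
  pi * (e1 + q * e0) < (1 - pi) * q * (z * L).
Proof.
move=> M0 q0 /andP[L0 L1] /andP[z0 ze0] e1_ge0 small0 small1 /andP[pi0 piM].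
have M4 : 0 < 4 * M by rewrite mulr_gt0.
move: small0 small1; rewrite !ltr_pdivlMr // => small0 small1.
have h1 : pi * e1 <= M * z * e1 by rewrite ler_wpM2r.
have h2 : pi * (q * e0) <= M * z * (q * e0).
  by rewrite ler_wpM2r // mulr_ge0 // ltW // (lt_le_trans z0).
have h3 : z * (e1 * (4 * M)) < z * (q * L) by rewrite ltr_pM2l.
have h4 : z * (q * e0 * (4 * M)) < z * (q * L).
  by rewrite ltr_pM2l // -mulrA ltr_pM2l.
have h5 : M * z <= M * e0 by rewrite ler_wpM2l // ltW.
have h6 : 0 < q * z * L by rewrite !mulr_gt0.
nra.
Qed.

Theorem proposition4p3 (R : realType) (d : measure_display)
  (T : measurableType d) (P : probability T R) (X : T -> R)
  (q lambda gamma w c theta : R) (u : R -> R) :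
  0 < q -> q <= 1 -> 0 < lambda -> 0 < gamma -> 1 < c -> 0 <= theta ->
  measurable_fun setT X ->
  (forall om, 0 <= X om) ->
  P [set om | X om = 0] = (1 - q)%:E ->
  (forall t, 0 <= t -> P [set om | t < X om] = (q * expR (- (lambda * t)))%:E) ->
  (forall x : R, is_derive x (1 : R) u (expR (- (gamma * x)))) ->
  exists I : R -> R, Ic I /\
    (expected_utility P u (ktilde theta c) w X (fun _ => 0%R)
      < expected_utility P u (ktilde theta c) w X I)%E.
Proof.
move=> q0 q1 lambda0 gamma0 c1 theta0 mX X0 _ tail u_derive.
have [n cn] : exists n : nat, c <= n%:R by exists (Num.trunc c).+1; exact/ltW/truncnS_gt.
pose M := (1 + theta) * n%:R * q / lambda.
have M0 : 0 < M by rewrite divr_gt0 // !mulr_gt0 //; lra.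
pose L := expR (- lambda).
have L0 : 0 < L by exact: expR_gt0.
have L01 : 0 < L <= 1 by rewrite L0 expR_le1 oppr_le0 ltW.
have [d0 d0_gt0 small0] : exists2 d0, 0 < d0 & expR (- (lambda * d0)) < L / (4 * M).
  by apply: exists_expR_lt => //; apply: divr_gt0 => //; exact: mulr_gt0.
have [y y_gt0 small1] : exists2 y, 0 < y & expR (- (gamma * y)) < q * L / (4 * M).
  by apply: exists_expR_lt => //; apply: divr_gt0; exact: mulr_gt0.
pose dd := d0 + y.
have dd_gt0 : 0 < dd by rewrite addr_gt0.
pose pi := premium P (ktilde theta c) (stop_loss dd \o X).
have /andP[pi0 pi_le] : 0 <= pi <= M * expR (- (lambda * dd)).
  apply: premium_ktilde_stop_loss_le => //;
    by rewrite ?cn ?q1 andbT ltW // ?(lt_trans ltr01 c1).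
exists (stop_loss dd); split; first exact/Ic_stop_loss/ltW.
rewrite /expected_utility premium_cst0 ?ktilde0 //.
under eq_integral do rewrite addr0 subr0.
apply: (stop_loss_expected_utility_gt gamma0 u_derive mX X0 tail w d0 dd pi) => //.
  by rewrite ltW //= lerDl ltW.
have -> : dd - d0 = y by rewrite /dd addrAC subrr add0r.
rewrite [lambda * (_ + 1)]mulrDr mulr1 opprD expRD.
apply: (deductible_condition M0 q0 L01 _ (expR_ge0 _) small0 small1); last exact/andP.
rewrite expR_gt0 ler_expR lerN2 /=; apply: ler_wpM2l; [exact: ltW | by rewrite lerDl ltW].
Qed.
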